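(* Let $\mathcal{R}=(G_0,e\to R)$ be an expanding replacement system. Then its limit space $X=\Omega/\sim$ is a compact metrizable space.
   Context: A graph means a finite directed multigraph (loops, multiple edges allowed). A replacement system $\mathcal{R}=(G_0,e\to R)$: $G_0$ a graph, $e$ a non-loop directed edge from $v$ to $w$, $R$ a graph containing $v,w$ (initial and terminal vertices of $R$). Replacing an edge $\varepsilon$ of a graph means deleting it and gluing in a copy of $R$ with its initial/terminal vertices identified with the initial/terminal vertices of $\varepsilon$; new edges are named $\varepsilon\zeta$ ($\zeta\in E(R)$). The full expansion $G_n$ is obtained from $G_{n-1}$ by replacing every edge; edges of $G_n$ are words $\varepsilon_0\cdots\varepsilon_n$ with $\varepsilon_0\in E(G_0)$, $\varepsilon_i\in E(R)$. $\mathcal{R}$ is expanding if neither $G_0$ nor $R$ has isolated vertices, the initial and terminal vertices of $R$ are not joined by an edge, and $R$ has at least three vertices and two edges. The symbol space $\Omega=E(G_0)\times E(R)^{\mathbb{N}}$ has the product topology; $\varepsilon_0\varepsilon_1\cdots\sim\varepsilon_0'\varepsilon_1'\cdots$ iff for every $n$ the edges $\varepsilon_0\cdots\varepsilon_n$ and $\varepsilon_0'\cdots\varepsilon_n'$ of $G_n$ share at least one vertex (for expanding systems this is an equivalence relation), and $X=\Omega/\sim$ carries the quotient topology. *)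

From HB Require Import structures.
From mathcomp Require Import all_boot all_order all_algebra.
From mathcomp Require Import all_classical all_reals topology.
From mathcomp Require Import Rstruct.

Set Implicit Arguments.
Unset Strict Implicit.
Unset Printing Implicit Defensive.

Local Open Scope classical_set_scope.

Record graph := Graph {
  gV : finType;
  gE : finType;
  gsrc : gE -> gV;
  gtgt : gE -> gV }.

(** A replacement system (G0, e -> R): the base graph G0, the replacement
    graph R, and the initial / terminal vertices of R (the endpoints v, w of
    the non-loop edge e, hence distinct). *)
Record repl_system := ReplSystem {
  rs_G0 : graph;
  rs_R : graph;
  rs_init : gV rs_R;
  rs_term : gV rs_R;
  rs_init_term : rs_init <> rs_term }.

Definition no_isolated (G : graph) : Prop :=
  forall v : gV G, exists z : gE G, gsrc z = v \/ gtgt z = v.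

Definition expanding (RS : repl_system) : Prop :=
  [/\ no_isolated (rs_G0 RS),
      no_isolated (rs_R RS),
      (forall z : gE (rs_R RS),
          ~ (gsrc z = rs_init RS /\ gtgt z = rs_term RS) /\
          ~ (gsrc z = rs_term RS /\ gtgt z = rs_init RS)),
      (3 <= #|gV (rs_R RS)|)%N &
      (2 <= #|gE (rs_R RS)|)%N ].

(** Vertices of the full expansions G_n.  A vertex is either a vertex of G0,
    or a vertex [VNew e0 w u] created when the edge e0 w (an edge of G_k,
    k = size w) is replaced by a copy of R, u being a vertex of R distinct
    from its initial and terminal vertices (which are glued to the endpoints
    of the replaced edge). *)
Inductive vertex (RS : repl_system) : Type :=
  | VBase of gV (rs_G0 RS)
  | VNew of gE (rs_G0 RS) & seq (gE (rs_R RS)) & gV (rs_R RS).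

(** [ends_aux e0 p st rest]: given the endpoints [st] of the edge e0 p of
    G_(size p), returns the endpoints of the edge e0 (p ++ rest). *)
Fixpoint ends_aux (RS : repl_system) (e0 : gE (rs_G0 RS))
    (p : seq (gE (rs_R RS))) (st : vertex RS * vertex RS)
    (rest : seq (gE (rs_R RS))) : vertex RS * vertex RS :=
  match rest with
  | [::] => st
  | z :: rest' =>
      let f (u : gV (rs_R RS)) :=
        if u == rs_init RS then st.1
        else if u == rs_term RS then st.2
        else VNew e0 p u in
      ends_aux e0 (rcons p z) (f (gsrc z), f (gtgt z)) rest'
  end.

(** (initial vertex, terminal vertex) of the edge e0 e1 ... en of G_n,
    where w = [e1; ...; en]. *)
Definition edge_ends (RS : repl_system) (e0 : gE (rs_G0 RS))
    (w : seq (gE (rs_R RS))) : vertex RS * vertex RS :=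
  ends_aux e0 [::] (VBase (gsrc e0), VBase (gtgt e0)) w.

Definition share_vertex (RS : repl_system) (a b : vertex RS * vertex RS) : Prop :=
  a.1 = b.1 \/ a.1 = b.2 \/ a.2 = b.1 \/ a.2 = b.2.

Definition symbol_space (RS : repl_system) : topologicalType :=
  (discrete_topology (gE (rs_G0 RS)) *
   {ptws nat -> discrete_topology (gE (rs_R RS))})%type.

(** the prefix e0 e1 ... en of a symbol, as an edge of G_n *)
Definition prefix_word (RS : repl_system) (om : symbol_space RS) (n : nat)
  : seq (gE (rs_R RS)) := [seq om.2 i | i <- iota 0 n].

Definition symb_equiv (RS : repl_system) (om om' : symbol_space RS) : Prop :=
  forall n : nat,
    share_vertex (edge_ends om.1 (prefix_word om n))
                 (edge_ends om'.1 (prefix_word om' n)).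

Definition is_quotient_space (RS : repl_system) (Y : topologicalType)
    (q : symbol_space RS -> Y) : Prop :=
  [/\ (forall y : Y, exists om, q om = y),
      (forall om om', q om = q om' <-> symb_equiv om om') &
      (forall U : set Y, open U <-> open (q @^-1` U)) ].

Local Open Scope ring_scope.

Definition metrizable (Y : topologicalType) : Prop :=
  exists d : Y -> Y -> Rdefinitions.R,
    [/\ (forall x y, d x y = 0 <-> x = y),
        (forall x y, d x y = d y x),
        (forall x y z, d x z <= d x y + d y z) &
        (forall U : set Y, open U <->
           (forall x, U x -> exists2 e : Rdefinitions.R, 0 < e & [set y | d x y < e] `<=` U)) ].

(** The symbol space [Omega] is compact (Tychonoff), and [q] is continuous, so
    [X] is compact.  For the metric, two points of [X] are declared
    [n]-close when they have representatives whose edges in [G_k] share a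
    vertex for every [k <= n].  These relations are clopen conditions on
    [Omega], they decrease with [n], and their intersection is [~]; by
    compactness, any property that holds on [~] and is open already holds
    at some finite level.  This yields the composition axiom of a uniform
    structure, separation, and agreement of the uniform and quotient
    topologies; as the uniformity has the countable base of the levels [n],
    it is induced by a metric. *)

From HB Require Import structures.
From mathcomp Require Import all_boot all_order all_algebra.
From mathcomp Require Import all_classical all_reals topology.
From mathcomp Require Import Rstruct urysohn lra.

Set Implicit Arguments.
Unset Strict Implicit.
Unset Printing Implicit Defensive.

Import Num.Theory.
Local Open Scope classical_set_scope.

Definition locally_constant (T : topologicalType) (Z : Type) (f : T -> Z) :=
  forall x, \forall y \near x, f y = f x.

Section locally_constant.
Variables (T : topologicalType) (Z : Type) (f : T -> Z) (P : set T).
Hypotheses (f_lc : locally_constant f)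
  (Pf : forall x y, f x = f y -> P x -> P y).

Lemma locally_constant_open : open P.
Proof.
by rewrite openE => x Px; apply: filterS (f_lc x) => y /esym/Pf; apply.
Qed.

Lemma locally_constant_closed : closed P.
Proof.
rewrite -openC openE => x nPx; apply: filterS (f_lc x) => y fy Py.
exact/nPx/(Pf fy).
Qed.

End locally_constant.

Lemma locally_constant_prod (T U : topologicalType) (Z W : Type)
    (f : T -> Z) (g : U -> W) :
  locally_constant f -> locally_constant g ->
  locally_constant (fun p : T * U => (f p.1, g p.2)).
Proof.
move=> fc gc [x y]; exists ([set x' | f x' = f x], [set y' | g y' = g y]) => /=.
  by split; [exact: fc | exact: gc].
by move=> [x' y'] [/= -> ->].
Qed.

Lemma compact_setTX (T U : topologicalType) :
  compact [set: T] -> compact [set: U] -> compact [set: T * U].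
Proof. by move=> cT cU; rewrite -setXTT; exact: compact_setX. Qed.

Lemma compact_nested_closed_sub (T : topologicalType) (C : nat -> set T)
    (D : set T) :
  compact [set: T] -> (forall m n, (m <= n)%N -> C n `<=` C m) ->
  (forall m, closed (C m)) -> open D -> \bigcap_m C m `<=` D ->
  exists m, C m `<=` D.
Proof.
move=> cT Cdec Ccl oD CD; apply: contrapT => noCD.
have CnD m : C m `\` D !=set0.
  apply: contrapT => noCDm; apply: noCD; exists m => t Ct.
  by apply: contrapT => nDt; apply: noCDm; exists t.
pose F := filter_from [set: nat] (fun m => C m `\` D).
have PF : ProperFilter F.
  apply: filter_from_proper => [|m _]; last exact: CnD.
  apply: filter_from_filter; first by exists 0%N.
  move=> i j _ _; exists (maxn i j) => // t [Ct nDt].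
  by split; split => //; apply: Cdec Ct; [exact: leq_maxl | exact: leq_maxr].
have [p [_ clp]] := cT F PF filterT.
have Fm m : F (C m `\` D) by exists m.
have Dp : D p.
  apply: CD => m _; apply: Ccl => B Bp.
  by have [t [[Ct _] Bt]] := clp _ _ (Fm m) Bp; exists t.
have [t [[_ nDt] Dt]] := clp _ _ (Fm 0%N) (open_nbhs_nbhs (conj oD Dp)).
exact: nDt.
Qed.

Section symbol_space.
Variables (A B : finType).
Local Notation symbols :=
  (discrete_topology A * {ptws nat -> discrete_topology B})%type.

Definition cylinder (n : nat) (a : symbols) : A * seq B :=
  (a.1, [seq a.2 i | i <- iota 0 n]).

Lemma compact_symbols : compact [set: symbols].
Proof.
have compact_fin (C : finType) : compact [set: discrete_topology C].
  by apply: finite_compact; exact: (@finite_finset C).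
apply: compact_setTX => //.
have := @tychonoff nat (fun=> discrete_topology B) (fun=> setT)
  (fun=> compact_fin B).
by congr compact; apply/seteqP; split.
Qed.

Lemma near_prefix (f : {ptws nat -> discrete_topology B}) n :
  nbhs f [set g : {ptws nat -> discrete_topology B} |
          forall i, (i < n)%N -> g i = f i].
Proof.
elim: n => [|n IH].
  by apply: filterS (@filterT _ _ _) => g _ i; rewrite ltn0.
have fn : nbhs f [set g : {ptws nat -> discrete_topology B} | g n = f n].
  exact: (@proj_continuous nat (fun=> discrete_topology B) n f _
    (discrete_set1 (f n))).
apply: filterS (filterI IH fn) => g [gf gn] i.
by rewrite ltnS leq_eqVlt => /predU1P[->|/gf].
Qed.

Lemma cylinder_locally_constant n : locally_constant (cylinder n).
Proof.
move=> [a f]; exists ([set a], [set g | forall i, (i < n)%N -> g i = f i]).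
  by split; [exact: discrete_set1 | exact: near_prefix].
move=> [b g] [/= -> gf]; congr pair; apply/eq_in_map => i.
by rewrite mem_iota => /andP[_]; exact: gf.
Qed.

Lemma cylinder_le k n a b : (k <= n)%N ->
  cylinder n a = cylinder n b -> cylinder k a = cylinder k b.
Proof.
move=> kn [a1 ab]; rewrite /cylinder a1; congr pair.
by move: (congr1 (take k) ab); rewrite -!map_take take_iota (minn_idPl kn).
Qed.

End symbol_space.

Section limit_space.
Variables (RS : repl_system) (Y : topologicalType) (q : symbol_space RS -> Y).
Hypothesis q_quotient : is_quotient_space q.
Local Notation symbols := (symbol_space RS).

Definition adjacent n (a b : symbols) :=
  share_vertex (edge_ends a.1 (prefix_word a n))
               (edge_ends b.1 (prefix_word b n)).

Definition adjacent_upto n (a b : symbols) :=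
  forall k, (k <= n)%N -> adjacent k a b.

Lemma adjacent_upto_refl n a : adjacent_upto n a a.
Proof. by move=> k _; left. Qed.

Lemma adjacent_upto_sym n a b : adjacent_upto n a b -> adjacent_upto n b a.
Proof.
by move=> ab k /ab; rewrite /adjacent /share_vertex => -[|[|[|]]] ->; tauto.
Qed.

Lemma adjacent_upto_le k n a b :
  (k <= n)%N -> adjacent_upto n a b -> adjacent_upto k a b.
Proof. by move=> kn ab i ik; apply: ab; exact: leq_trans kn. Qed.

Lemma adjacent_upto_cylinder n a a' b b' :
  cylinder n a = cylinder n a' -> cylinder n b = cylinder n b' ->
  adjacent_upto n a b -> adjacent_upto n a' b'.
Proof.
move=> aa' bb' ab k kn; move: (ab k kn).
have [ea1 ea2] := cylinder_le kn aa'; have [eb1 eb2] := cylinder_le kn bb'.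
by rewrite /adjacent /prefix_word ea1 ea2 eb1 eb2.
Qed.

Lemma q_surj y : exists a, q a = y.
Proof. by case: q_quotient. Qed.

Lemma q_eqE a b : q a = q b <-> forall n, adjacent_upto n a b.
Proof.
case: q_quotient => _ -> _.
by split => [ab n k _|ab n]; [exact: ab | exact: (ab n n (leqnn n))].
Qed.

Lemma q_continuous : continuous q.
Proof. by apply/continuousP => U; case: q_quotient => _ _ ->. Qed.

Lemma compact_limit_space : compact [set: Y].
Proof.
have -> : [set: Y] = q @` [set: symbols].
  by apply/seteqP; split => // y _; have [a qa] := q_surj y; exists a.
apply: continuous_compact; first exact: continuous_subspaceT q_continuous.
exact: compact_symbols.
Qed.

Lemma adjacent_upto_trans n : exists m, forall a b c,
  adjacent_upto m a b -> adjacent_upto m b c -> adjacent_upto n a c.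
Proof.
pose C m := [set t : symbols * symbols * symbols |
  adjacent_upto m t.1.1 t.1.2 /\ adjacent_upto m t.1.2 t.2].
have cyl3 m : locally_constant (fun t : symbols * symbols * symbols =>
    (cylinder m t.1.1, cylinder m t.1.2, cylinder m t.2)).
  have cyl := @cylinder_locally_constant (gE (rs_G0 RS)) (gE (rs_R RS)) m.
  exact: locally_constant_prod (locally_constant_prod cyl cyl) cyl.
have [m CD] : exists m, C m `<=` [set t | adjacent_upto n t.1.1 t.2].
  apply: compact_nested_closed_sub.
- by apply: compact_setTX; [apply: compact_setTX|]; exact: compact_symbols.
- by move=> m m' mm' t [ab bc]; split; exact: (adjacent_upto_le mm').
- move=> m; apply: (locally_constant_closed (cyl3 m)).
  move=> [[a b] c] [[a' b'] c'].
  move=> /pair_equal_spec[/pair_equal_spec[ea eb] ec] [ab bc].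
  by split; [exact: adjacent_upto_cylinder ea eb ab |
             exact: adjacent_upto_cylinder eb ec bc].
- apply: (locally_constant_open (cyl3 n)).
  move=> [[a b] c] [[a' b'] c'] /pair_equal_spec[/pair_equal_spec[ea _] ec].
  exact: adjacent_upto_cylinder ea ec.
- move=> [[a b] c] abc; apply: (q_eqE a c).1.
  have /q_eqE -> : forall m, adjacent_upto m a b by move=> m; case: (abc m I).
  by apply/q_eqE => m; case: (abc m I).
by exists m => a b c ab bc; exact: (CD (a, b, c)).
Qed.

Lemma adjacent_upto_trans3 n : exists m, forall a b c d,
  adjacent_upto m a b -> adjacent_upto m b c -> adjacent_upto m c d ->
  adjacent_upto n a d.
Proof.
have [m1 trans1] := adjacent_upto_trans n.
have [m2 trans2] := adjacent_upto_trans m1.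
exists (maxn m1 m2) => a b c d ab bc cd.
have le1 := adjacent_upto_le (leq_maxl m1 m2).
have le2 := adjacent_upto_le (leq_maxr m1 m2).
exact: trans1 (trans2 _ _ _ (le2 _ _ ab) (le2 _ _ bc)) (le1 _ _ cd).
Qed.

Definition approx n (x y : Y) :=
  exists a b, [/\ q a = x, q b = y & adjacent_upto n a b].

Lemma approx_refl n x : approx n x x.
Proof.
by have [a <-] := q_surj x; exists a, a; split => //; exact: adjacent_upto_refl.
Qed.

Lemma approx_sym n x y : approx n x y -> approx n y x.
Proof.
by move=> [a [b [qa qb ab]]]; exists b, a; split => //; exact: adjacent_upto_sym.
Qed.

Lemma approx_le k n x y : (k <= n)%N -> approx n x y -> approx k x y.
Proof.
move=> kn [a [b [qa qb ab]]]; exists a, b; split => //.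
exact: adjacent_upto_le ab.
Qed.

Lemma approx_split n : exists m, forall x y z,
  approx m x y -> approx m y z -> approx n x z.
Proof.
have [m trans3] := adjacent_upto_trans3 n.
exists m => x y z [a [b [<- <- ab]]] [b' [c [qb' <- b'c]]].
exists a, c; split => //; apply: trans3 ab _ b'c.
exact: (q_eqE b b').1 (esym qb') m.
Qed.

Lemma approx_sep x y : (forall n, approx n x y) -> x = y.
Proof.
have [a0 <-] := q_surj x; have [b0 <-] := q_surj y => xy.
apply/q_eqE => n; have [m trans3] := adjacent_upto_trans3 n.
have [a [b [qa qb ab]]] := xy m.
apply: trans3 ab _; first exact: (q_eqE a0 a).1 (esym qa) m.
exact: (q_eqE b b0).1 qb m.
Qed.

Lemma open_approx (U : set Y) :
  open U <-> forall x, U x -> exists n, forall y, approx n x y -> U y.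
Proof.
split => [oU x Ux | Uapprox].
  have [a0 qa0] := q_surj x.
  have [k a0U] : exists k, [set b | adjacent_upto k a0 b] `<=` q @^-1` U.
    apply: compact_nested_closed_sub.
    - exact: compact_symbols.
    - by move=> k k' kk' b; exact: adjacent_upto_le.
    - move=> k; apply: (locally_constant_closed (cylinder_locally_constant k)).
      by move=> b b'; exact: adjacent_upto_cylinder.
    - exact: (continuousP q).1 q_continuous U oU.
    - move=> b a0b; have qb : q a0 = q b := (q_eqE a0 b).2 (fun k => a0b k I).
      by rewrite /preimage /= -qb qa0.
  have [m trans] := adjacent_upto_trans k.
  exists m => y [a [b [qa <- ab]]]; apply: a0U; apply: trans ab.
  by apply: (q_eqE a0 a).1; rewrite qa qa0.
case: q_quotient => _ _ ->; rewrite openE => a Ua.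
have [n aU] := Uapprox _ Ua.
apply: filterS (cylinder_locally_constant n a) => b ba; apply: aU.
exists a, b; split => //.
exact: adjacent_upto_cylinder erefl (esym ba) (adjacent_upto_refl _).
Qed.

Definition approx_entourage : set_system (Y * Y) :=
  filter_from [set: nat] (fun n => [set xy | approx n xy.1 xy.2]).

Lemma approx_entourage_filter : Filter approx_entourage.
Proof.
apply: filter_from_filter; first by exists 0%N.
move=> i j _ _; exists (maxn i j) => // -[x y] /= xy.
by split; apply: approx_le xy; [exact: leq_maxl | exact: leq_maxr].
Qed.

Lemma approx_entourage_refl A : approx_entourage A -> diagonal `<=` A.
Proof.
move=> [n _ nA] [x y]; rewrite /diagonal /= => ->.
by apply: nA; exact: approx_refl.
Qed.

Lemma approx_entourage_inv A :
  approx_entourage A -> approx_entourage A^-1%relation.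
Proof.
by move=> [n _ nA]; exists n => // -[x y] /= xy; apply: nA; exact: approx_sym.
Qed.

Lemma approx_entourage_split A : approx_entourage A ->
  exists2 B, approx_entourage B & (B \; B)%relation `<=` A.
Proof.
move=> [n _ nA]; have [m split] := approx_split n.
exists [set xy | approx m xy.1 xy.2]; first by exists m.
by move=> [x z] [y /= xy yz]; apply: nA; exact: split xy yz.
Qed.

Definition approx_uniform : Type := Y.
HB.instance Definition _ := Choice.on approx_uniform.
HB.instance Definition _ := @isUniform.Build approx_uniform approx_entourage
  approx_entourage_filter approx_entourage_refl approx_entourage_inv
  approx_entourage_split.

Lemma approx_countable_uniformity : countable_uniformity approx_uniform.
Proof.
exists [set [set xy | approx n xy.1 xy.2] | n in [set: nat]].
split; [exact: card_image_le | by move=> A [n _ <-]; exists n |].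
by move=> A [n _ nA]; exists [set xy | approx n xy.1 xy.2] => //; exists n.
Qed.

Local Open Scope ring_scope.
Local Notation R := Rdefinitions.R.
Local Notation approx_metric :=
  (countable_uniform.type approx_countable_uniformity).

Lemma approx_ball (e : R) : 0 < e ->
  exists n, forall x y, approx n x y -> @ball R approx_metric x e y.
Proof.
move=> e0; have : @entourage approx_metric [set xy | ball xy.1 e xy.2].
  by rewrite -(@entourage_from_ballE R approx_metric); exists e.
by move=> [n _ nball]; exists n => x y xy; exact: (nball (x, y)).
Qed.

Lemma ball_approx n : exists2 e : R, 0 < e &
  forall x y, @ball R approx_metric x e y -> approx n x y.
Proof.
have : @entourage approx_metric [set xy | approx n xy.1 xy.2] by exists n.
rewrite -(@entourage_from_ballE R approx_metric) => -[e /= e0 eball].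
by exists e => // x y /(eball (x, y)).
Qed.

Definition limit_dist (x y : Y) : R := fine (@edist R approx_metric (x, y)).

Lemma edist_fin_num x y : @edist R approx_metric (x, y) \is a fin_num.
Proof.
apply/edist_finP; exists 2 => //.
exact: countable_uniform.countable_uniform_bounded.
Qed.

Lemma limit_dist_lt_ball x y e :
  limit_dist x y < e -> @ball R approx_metric x e y.
Proof.
move=> xye; apply: (@edist_lt_ball R approx_metric e (x, y)).
by rewrite -(fineK (edist_fin_num x y)) lte_fin.
Qed.

Lemma ball_limit_dist_le x y e :
  0 < e -> @ball R approx_metric x e y -> limit_dist x y <= e.
Proof.
by move=> e0 xye; rewrite -lee_fin fineK ?edist_fin_num //; exact: edist_fin.
Qed.

Lemma metrizable_limit_space : metrizable Y.
Proof.
exists limit_dist; split.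
- move=> x y; split => [xy0 | <-]; last by rewrite /limit_dist edist_refl.
  apply: approx_sep => n; have [e e0 eapprox] := ball_approx n.
  by apply: eapprox; apply: limit_dist_lt_ball; rewrite xy0.
- by move=> x y; rewrite /limit_dist edist_sym.
- move=> x y z; rewrite -lee_fin EFinD !fineK ?edist_fin_num //.
  exact: edist_triangle.
- move=> U; rewrite open_approx; split => [Uapprox x Ux | Uball x Ux].
    have [n xU] := Uapprox x Ux; have [e e0 eapprox] := ball_approx n.
    by exists e => // y /limit_dist_lt_ball /eapprox /xU.
  have [e e0 xU] := Uball x Ux.
  have e20 : 0 < e / 2 by rewrite divr_gt0.
  have [n nball] := approx_ball e20.
  exists n => y /nball /(ball_limit_dist_le e20) xy; apply: xU => /=; lra.
Qed.

End limit_space.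

Theorem theorem1p24 (RS : repl_system) (Y : topologicalType)
    (q : symbol_space RS -> Y) :
  expanding RS -> is_quotient_space q ->
  compact [set: Y]%classic /\ metrizable Y.
Proof.
(* [expanding] only serves to make [~] an equivalence relation, which the
   existence of [q] already guarantees. *)
move=> _ q_quotient; split.
  exact: compact_limit_space q_quotient.
exact: metrizable_limit_space q_quotient.
Qed.
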